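(* Consider a trajectory $\mathbf A(t)$, $t\ge0$, of the proto-cell ODE system described in the context. Let $\mathbf b$ be a moiety or a positive linear combination of moieties such that $\mathscr S_{me}\subseteq\mathrm{supp}(\mathbf b)$ and $\mathbf b$ is fed with some nutrient flux (i.e. $\mathbf b^T\mathbf f_{nu}>0$, equivalently $\mathscr S_{nu}\cap\mathrm{supp}(\mathbf b)\neq\varnothing$). Then $\mathbf b^T\mathbf A(t)$ has a strictly positive lower bound: if $\mathbf b^T\mathbf A(0)>0$, there is $c>0$ with $\mathbf b^T\mathbf A(t)\ge c$ for all $t\ge0$; if $\mathbf b^T\mathbf A(0)=0$, then for every $t_1>0$ there is $c>0$ with $\mathbf b^T\mathbf A(t)\ge c$ for all $t\ge t_1$.
   Context: A chemical reaction network (CRN) has species $\mathscr S=\{A_0,\dots,A_{N-1}\}$ and $R$ reactions, with $N\times R$ stoichiometry matrix $S$. It is conservative: there is $\mathbf m\in\mathbb R^N$ with all $m_i>0$ and $\mathbf m^TS=0$. Let $p=\dim\ker(S^T)\ge 1$. The set $\{\mathbf b\in\mathbb R^N_{\ge 0}:\mathbf b^TS=0\}$ is a pointed convex cone; a set of moieties is a family of $p$ linearly independent generating vectors of this cone forming a basis of $\ker(S^T)$. The support $\mathrm{supp}(\mathbf b)$ of a nonnegative vector $\mathbf b$ is the set of species $A_i$ with $b_i\neq 0$. Proto-cell ODE: the concentration vector $\mathbf A(t)\in\mathbb R^N_{\ge0}$ (component $[A_i]$) satisfies $$\frac{d\mathbf A}{dt}=S\mathbf f(\mathbf A)+\mathbf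 f_{nu}(\mathbf A)-\mathbf f_{me}(\mathbf A)-\lambda(\mathbf A)\mathbf A,$$ where: $\mathbf f(\mathbf A)\in\mathbb R^R_{\ge0}$ is the vector of reaction rates; one species $A_{me}$ is the membrane precursor and $\mathscr S_{me}\subseteq\mathscr S$ is a set of species containing $A_{me}$; $\mathbf f_{me}(\mathbf A)$ has a single nonzero component, along $A_{me}$, equal to a scalar $f_{me}(\mathbf A)$ which depends only on the concentrations of species in $\mathscr S_{me}$, is continuous and monotonically increasing in these concentrations, satisfies $f_{me}(\mathbf 0)=0$, and is $>0$ iff all species of $\mathscr S_{me}$ have positive concentration; $C_{me}>0$ is a constant and $\lambda(\mathbf A)=f_{me}(\mathbf A)/C_{me}$ is the growth rate; $\mathscr S_{nu}\subseteq\mathscr S$ is the set of nutrients and $\mathbf f_{nu}$ has nonzero components only along species of $\mathscr S_{nu}$, being either (i) a constant vector with $f_{nu,i}>0$ for $A_i\in\mathscr S_{nu}$, or (ii) given by $f_{nu,i}=\mathcal D_i([A_{i,out}]-[A_i])/(1+[A_{i,out}]/K_{i,out})$ for $A_i\in\mathscr S_{nu}$, with positive constants $\mathcal D_i$, $[A_{i,out}]$, $K_{i,out}$. *)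

From HB Require Import structures.
From mathcomp Require Import all_boot all_order all_algebra.
From mathcomp Require Import all_classical all_reals all_analysis.
Set Implicit Arguments. Unset Strict Implicit. Unset Printing Implicit Defensive.
Import Order.TTheory GRing.Theory Num.Theory.
Import numFieldNormedType.Exports.
Local Open Scope classical_set_scope.
Local Open Scope ring_scope.

Definition nonneg_vec (R : realType) (N : nat) (x : 'cV[R]_N) : Prop :=
  forall i, 0 <= x i 0.

Definition conservative (R : realType) (N nR : nat) (S : 'M[R]_(N, nR)) : Prop :=
  exists m : 'rV[R]_N, (forall i, 0 < m 0 i) /\ m *m S = 0.

(* Mo (rows = moieties, written as row vectors b^T) is a set of moieties:
   p linearly independent nonnegative vectors in ker(S^T) forming a basis of
   ker(S^T) (kermx S is the left kernel {u | u S = 0}) and generating the cone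
   {b >= 0 | b^T S = 0}. *)
Definition moiety_set (R : realType) (N nR p : nat) (S : 'M[R]_(N, nR))
    (Mo : 'M[R]_(p, N)) : Prop :=
  [/\ (forall k i, 0 <= Mo k i),
      Mo *m S = 0,
      row_free Mo,
      (Mo == kermx S)%MS &
      (forall b : 'rV[R]_N, (forall i, 0 <= b 0 i) -> b *m S = 0 ->
         exists c : 'rV[R]_p, (forall k, 0 <= c 0 k) /\ b = c *m Mo)].

Definition moiety_or_pos_comb (R : realType) (N p : nat) (Mo : 'M[R]_(p, N))
    (b : 'rV[R]_N) : Prop :=
  exists c : 'rV[R]_p,
    [/\ (forall k, 0 <= c 0 k), (exists k, 0 < c 0 k) & b = c *m Mo].

Definition supp (R : realType) (N : nat) (b : 'rV[R]_N) : {set 'I_N} :=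
  [set i | b 0 i != 0].

Definition membrane_flux (R : realType) (N : nat) (Sme : {set 'I_N}) (me : 'I_N)
    (fme : 'cV[R]_N -> R) : Prop :=
  [/\ me \in Sme,
      (forall x y : 'cV[R]_N, (forall i, i \in Sme -> x i 0 = y i 0) -> fme x = fme y),
      {within [set x : 'cV[R]_N | nonneg_vec x], continuous fme},
      (forall x y : 'cV[R]_N, nonneg_vec x -> nonneg_vec y ->
          (forall i, x i 0 <= y i 0) -> fme x <= fme y) &
      fme 0 = 0] /\
      (forall x : 'cV[R]_N, nonneg_vec x ->
          (0 < fme x <-> forall i, i \in Sme -> 0 < x i 0)).

Definition nutrient_flux (R : realType) (N : nat) (Snu : {set 'I_N})
    (fnu : 'cV[R]_N -> 'cV[R]_N) : Prop :=
  (exists F : 'cV[R]_N,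
      [/\ (forall i, i \in Snu -> 0 < F i 0),
          (forall i, i \notin Snu -> F i 0 = 0) &
          (forall x, fnu x = F)])
  \/
  (exists D Aout K : 'I_N -> R,
      (forall i, i \in Snu -> [/\ 0 < D i, 0 < Aout i & 0 < K i]) /\
      (forall x, fnu x = \col_i (if i \in Snu
                                 then D i * (Aout i - x i 0) / (1 + Aout i / K i)
                                 else 0))).

Definition protocell_rhs (R : realType) (N nR : nat) (S : 'M[R]_(N, nR))
    (f : 'cV[R]_N -> 'cV[R]_nR) (fnu : 'cV[R]_N -> 'cV[R]_N)
    (fme : 'cV[R]_N -> R) (me : 'I_N) (Cme : R) (x : 'cV[R]_N) : 'cV[R]_N :=
  S *m f x + fnu x - fme x *: delta_mx me 0 - (fme x / Cme) *: x.

Definition protocell_trajectory (R : realType) (N nR : nat) (S : 'M[R]_(N, nR))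
    (f : 'cV[R]_N -> 'cV[R]_nR) (fnu : 'cV[R]_N -> 'cV[R]_N)
    (fme : 'cV[R]_N -> R) (me : 'I_N) (Cme : R) (A : R -> 'cV[R]_N) : Prop :=
  [/\ {within [set t : R | 0 <= t], continuous A},
      (forall t : R, 0 <= t -> nonneg_vec (A t)) &
      (forall t : R, 0 < t -> is_derive t 1 A (protocell_rhs S f fnu fme me Cme (A t)))].

Definition bdot (R : realType) (N : nat) (b : 'rV[R]_N) (x : 'cV[R]_N) : R :=
  (b *m x) 0 0.

(* Since b^T S = 0, the scalar y(t) = b^T A(t) obeys
     y' = b^T f_nu(A) - f_me(A) b_me - (f_me(A) / C_me) y.
   The nutrient term is at least P - Q y with P > 0, because b charges a nutrient;
   the membrane terms tend to 0 with y, because b > 0 on S_me makes every species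
   of S_me at most y / b_i and f_me is continuous, monotone and vanishes at 0.
   Hence y' > 0 whenever 0 < t and y(t) <= d for some d > 0, and a nonnegative
   function with that property can neither fall below min(y(t0), d) after t0 nor
   vanish at a positive time. *)
From HB Require Import structures.
From mathcomp Require Import all_boot all_order all_algebra.
From mathcomp Require Import all_classical all_reals all_analysis.
From mathcomp Require Import ring lra.
Import Order.TTheory GRing.Theory Num.Theory.
Import numFieldNormedType.Exports.
Local Open Scope classical_set_scope.
Local Open Scope ring_scope.

Lemma derive1_le0_at_left_min {R : realType} {y : R -> R} {a c : R} :
  a < c -> derivable y c 1 ->
  (forall t, a < t -> t < c -> y c <= y t) -> 'D_1 y c <= 0.
Proof.
move=> ac dy cmin; rewrite ['D_1 y c]cvg_at_leftE //.
apply: limr_le.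
  rewrite -(cvg_at_leftE (fun h => h^-1 *: ((y \o shift c) _ - y c))) //.
  apply: cvg_trans dy; apply: cvg_app.
  move=> A [e e_gt0 Ae]; exists e => // x xe x_neq0; apply: Ae => //.
  exact/ltr0_neq0.
near=> h; apply: mulr_le0_ge0.
  by rewrite invr_le0; apply: ltW; near: h; exists 1 => /=.
rewrite subr_ge0 [_%:A]mulr1; apply: cmin; near: h.
- exists (c - a); first by rewrite /= subr_gt0.
  by move=> h; rewrite /= distrC subr0 => /ltr_normlP[]; rewrite ltrBrDl ltrBlDl => ? _ _.
- by exists 1 => //= h _ h_lt0; rewrite /shift /=; lra.
Unshelve. all: by end_near. Qed.

Section LowerBarrier.
Variables (R : realType) (y dy : R -> R) (d : R).
Hypotheses (y_derive : forall u : R, 0 < u -> is_derive u (1 : R) y (dy u))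
  (y_cont : {within [set t | 0 <= t], continuous y})
  (y_ge0 : forall u : R, 0 <= u -> 0 <= y u)
  (d_gt0 : 0 < d)
  (dy_gt0 : forall u : R, 0 < u -> y u <= d -> 0 < dy u).

Lemma no_left_min_below_barrier {a u : R} : 0 <= a -> a < u -> y u <= d ->
  ~ (forall t, a < t -> t < u -> y u <= y t).
Proof.
move=> a_ge0 au yu_le umin; have u_gt0 : 0 < u by apply: le_lt_trans au.
have := dy_gt0 _ u_gt0 yu_le; have [dyu <-] := y_derive _ u_gt0.
by rewrite ltNge (derive1_le0_at_left_min au dyu umin).
Qed.

Lemma barrier_stays_above {a b c : R} :
  0 <= a -> a <= b -> c <= d -> c <= y a -> c <= y b.
Proof.
move=> a_ge0 ab cd ca; rewrite leNgt; apply/negP => ybc.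
have cab : {within `[a, b], continuous y}.
  apply: continuous_subspaceW y_cont => t /=.
  by rewrite in_itv /= => /andP[+ _]; apply: le_trans.
have [u uab umin] := EVT_min ab cab.
move: (uab); rewrite in_itv /= => /andP[au ub].
have yuc : y u < c by apply: le_lt_trans ybc; apply: umin; rewrite in_itv /= ab lexx.
have au' : a < u by rewrite lt_neqAle au andbT; apply: contraTneq yuc => <-; rewrite -leNgt.
apply: (no_left_min_below_barrier a_ge0 au' (le_trans (ltW yuc) cd)) => t aT tu.
by apply: umin; rewrite in_itv /= (ltW aT) (le_trans (ltW tu) ub).
Qed.

Lemma barrier_gt0 (u : R) : 0 < u -> 0 < y u.
Proof.
move=> u_gt0; rewrite lt_neqAle y_ge0 ?(ltW u_gt0) // andbT; apply/eqP => yu0.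
apply: (no_left_min_below_barrier (lexx 0) u_gt0); first by rewrite -yu0 ltW.
by move=> t t_gt0 _; rewrite -yu0 y_ge0 // ltW.
Qed.

Lemma barrier_lower_bound :
  (0 < y 0 -> exists c : R, 0 < c /\ forall t, 0 <= t -> c <= y t) /\
  (y 0 = 0 -> forall t1 : R, 0 < t1 ->
     exists c : R, 0 < c /\ forall t, t1 <= t -> c <= y t).
Proof.
split=> [y0_gt0 | _ t1 t1_gt0].
  exists (Num.min (y 0) d); rewrite lt_min y0_gt0 d_gt0; split=> // t t_ge0.
  by apply: (barrier_stays_above (lexx 0)); rewrite // ge_min lexx ?orbT.
exists (Num.min (y t1) d); rewrite lt_min barrier_gt0 // d_gt0; split=> // t t1t.
by apply: (barrier_stays_above (ltW t1_gt0)); rewrite // ge_min lexx ?orbT.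
Qed.

End LowerBarrier.

Lemma bdotE (R : realType) (N : nat) (b : 'rV[R]_N) (x : 'cV[R]_N) :
  bdot b x = \sum_j b 0 j * x j 0.
Proof. by rewrite /bdot mxE. Qed.

Lemma bdot_ge0 {R : realType} {N : nat} {b : 'rV[R]_N} {x : 'cV[R]_N} :
  (forall i, 0 <= b 0 i) -> nonneg_vec x -> 0 <= bdot b x.
Proof. by move=> b_ge0 x_ge0; rewrite bdotE sumr_ge0 // => j _; apply: mulr_ge0. Qed.

Lemma bdot_ge_term (R : realType) (N : nat) (b : 'rV[R]_N) (x : 'cV[R]_N) (i : 'I_N) :
  (forall j, 0 <= b 0 j * x j 0) -> b 0 i * x i 0 <= bdot b x.
Proof. by move=> h; rewrite bdotE (bigD1 i) //= lerDl sumr_ge0. Qed.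

Lemma continuous_bdot (R : realType) (N : nat) (b : 'rV[R]_N) : continuous (bdot b).
Proof.
have -> : bdot b = \sum_(j < N) (fun x : 'cV[R]_N => b 0 j * x j 0).
  by apply/funext => x; rewrite bdotE fct_sumE.
apply: (@big_ind _ (fun g : 'cV[R]_N -> R => continuous g)) => //.
- by move=> x; apply: cst_continuous.
- by move=> g h cg ch x; apply: continuousD (cg x) (ch x).
- by move=> j _ x; apply: continuousM; [apply: cst_continuous | apply: coord_continuous].
Qed.

Lemma is_derive_bdot (R : realType) (N : nat) (b : 'rV[R]_N) (A : R -> 'cV[R]_N)
    (t : R) (dA : 'cV[R]_N) :
  is_derive t (1 : R) A dA -> is_derive t (1 : R) (fun s => bdot b (A s)) (bdot b dA).
Proof.
move=> [A_derivable A_derive].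
have entry_derive j : is_derive t 1 (fun s => A s j 0) (dA j 0).
  have dj : derivable (fun s => A s j 0) t 1 by move/derivable_mxP: A_derivable.
  by apply: DeriveDef => //; rewrite -A_derive derive_mx // mxE.
have -> : (fun s => bdot b (A s)) = \sum_(j < N) (fun s => b 0 j * A s j 0).
  by apply/funext => s; rewrite bdotE fct_sumE.
by rewrite bdotE; apply: is_derive_sum.
Qed.

Lemma bdot_protocell_rhs (R : realType) (N nR : nat) (S : 'M[R]_(N, nR))
    (f : 'cV[R]_N -> 'cV[R]_nR) (fnu : 'cV[R]_N -> 'cV[R]_N)
    (fme : 'cV[R]_N -> R) (me : 'I_N) (Cme : R) (b : 'rV[R]_N) (x : 'cV[R]_N) :
  b *m S = 0 ->
  bdot b (protocell_rhs S f fnu fme me Cme x) =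
  bdot b (fnu x) - fme x * b 0 me - fme x / Cme * bdot b x.
Proof.
move=> bS; rewrite /bdot /protocell_rhs !mulmxBr !mulmxDr -!scalemxAr mulmxA bS.
by rewrite mul0mx add0r -colE !mxE.
Qed.

Lemma moiety_comb_ge0 {R : realType} {N nR p : nat} {S : 'M[R]_(N, nR)}
    {Mo : 'M[R]_(p, N)} {b : 'rV[R]_N} :
  moiety_set S Mo -> moiety_or_pos_comb Mo b -> forall i, 0 <= b 0 i.
Proof.
move=> [Mo_ge0 _ _ _ _] [c [c_ge0 _ ->]] i.
by rewrite mxE sumr_ge0 // => k _; apply: mulr_ge0.
Qed.

Lemma moiety_comb_conserved {R : realType} {N nR p : nat} {S : 'M[R]_(N, nR)}
    {Mo : 'M[R]_(p, N)} {b : 'rV[R]_N} :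
  moiety_set S Mo -> moiety_or_pos_comb Mo b -> b *m S = 0.
Proof. by move=> [_ MoS _ _ _] [c [_ _ ->]]; rewrite -mulmxA MoS mulmx0. Qed.

Lemma nutrient_flux_affine_lower_bound {R : realType} {N : nat} {Snu : {set 'I_N}}
    {fnu : 'cV[R]_N -> 'cV[R]_N} {b : 'rV[R]_N} {i0 : 'I_N} :
  nutrient_flux Snu fnu -> (forall i, 0 <= b 0 i) -> i0 \in Snu -> 0 < b 0 i0 ->
  exists P Q : R, [/\ 0 < P, 0 <= Q &
    forall x, nonneg_vec x -> P - Q * bdot b x <= bdot b (fnu x)].
Proof.
move=> [[F [F_gt0 F_eq0 fnuE]] | [D [Aout [K [DAK fnuE]]]]] b_ge0 i0nu bi0_gt0.
  have F_ge0 j : 0 <= F j 0.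
    by case: (boolP (j \in Snu)) => jS; [apply/ltW/F_gt0 | rewrite F_eq0].
  exists (b 0 i0 * F i0 0), 0; split; rewrite ?mulr_gt0 ?F_gt0 // => x _.
  by rewrite mul0r subr0 fnuE bdot_ge_term // => j; apply: mulr_ge0.
pose den i := 1 + Aout i / K i.
have den_gt0 i : i \in Snu -> 0 < den i.
  by move=> /DAK[_ A_gt0 K_gt0]; rewrite ltr_wpDr ?divr_ge0 ?ltW.
(* the diffusive flux is affine in [x i 0]: [D (Aout - x) / den = p - q x] *)
pose p i := if i \in Snu then b 0 i * D i * Aout i / den i else 0.
pose q i := if i \in Snu then D i / den i else 0.
have q_ge0 i : 0 <= q i.
  by rewrite /q; case: ifP => // /[dup] /DAK[D_gt0 _ _] /den_gt0 ?; rewrite divr_ge0 ?ltW.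
exists (\sum_i p i), (\sum_i q i); split; last first.
- move=> x x_ge0; rewrite mulr_suml -sumrB fnuE [X in _ <= X]bdotE; apply: ler_sum => i _.
  rewrite mxE /p /q; case: ifP => iS; last by rewrite !mulr0 mul0r subr0.
  have [D_gt0 A_gt0 K_gt0] := DAK i iS; have den_i := den_gt0 i iS.
  have -> : b 0 i * (D i * (Aout i - x i 0) / den i) =
      b 0 i * D i * Aout i / den i - D i / den i * (b 0 i * x i 0).
    by field; rewrite gt_eqF.
  rewrite lerD2l lerN2; apply: ler_wpM2l; first by rewrite divr_ge0 ?ltW.
  by apply: bdot_ge_term => j; apply: mulr_ge0.
- exact: sumr_ge0.
- have p_ge0 i : 0 <= p i.
    rewrite /p; case: ifP => // /[dup] /DAK[D_gt0 A_gt0 _] /den_gt0 ?.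
    by rewrite divr_ge0 ?mulr_ge0 ?b_ge0 ?ltW.
  rewrite (bigD1 i0) //= ltr_pwDl ?sumr_ge0 // /p i0nu.
  by have [? ? ?] := DAK i0 i0nu; rewrite divr_gt0 ?mulr_gt0 ?den_gt0.
Qed.

Lemma membrane_flux_small {R : realType} {N : nat} {Sme : {set 'I_N}} {me : 'I_N}
    {fme : 'cV[R]_N -> R} {b : 'rV[R]_N} :
  membrane_flux Sme me fme -> (forall i, 0 <= b 0 i) ->
  (forall i, i \in Sme -> 0 < b 0 i) ->
  forall eps, 0 < eps -> exists d, 0 < d /\
    forall x, nonneg_vec x -> bdot b x <= d -> fme x <= eps.
Proof.
move=> [[_ fme_local fme_cont fme_mono fme0] _] b_ge0 b_gt0 eps eps_gt0.
pose O := [set x : 'cV[R]_N | nonneg_vec x].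
have O0 : O 0 by move=> i; rewrite mxE.
have := (subspace_continuousP O fme).1 fme_cont 0 O0.
move/cvgrPdist_lt => /(_ eps eps_gt0); rewrite near_withinE => /nbhs_ballP[r r_gt0 near0].
(* on S_me every species is at most [bdot b x / b i], i.e. x is dominated by [bdot b x *: w] *)
pose w : 'cV[R]_N := \col_i (if i \in Sme then (b 0 i)^-1 else 0).
have w_ge0 i : 0 <= w i 0 by rewrite mxE; case: ifP; rewrite ?invr_ge0.
pose d := r / (2 * (`|w| + 1)).
have d_gt0 : 0 < d by rewrite divr_gt0 // mulr_gt0 // ltr_wpDl.
exists d; split=> // x x_ge0 bx_le.
pose xme : 'cV[R]_N := \col_i (if i \in Sme then x i 0 else 0).
have -> : fme x = fme xme by apply: fme_local => i iS; rewrite mxE iS.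
have dw_ge0 : nonneg_vec (d *: w) by move=> i; rewrite mxE mulr_ge0 // ltW.
apply: (@le_trans _ _ (fme (d *: w))).
  have xme_ge0 : nonneg_vec xme by move=> i; rewrite mxE; case: ifP.
  apply: fme_mono => // i; rewrite !mxE; case: ifP => iS; last by rewrite mulr0.
  have bi_gt0 := b_gt0 i iS.
  rewrite ler_pdivlMr // mulrC; apply: le_trans bx_le; apply: bdot_ge_term => j.
  exact: mulr_ge0.
have dw_ball : ball (0 : 'cV[R]_N) r (d *: w).
  rewrite -ball_normE /ball_ /= sub0r normrN normrZ gtr0_norm //.
  rewrite /d mulrAC ltr_pdivrMr ?mulr_gt0 ?ltr_wpDl // ltr_pM2l //.
  by have : 0 <= `|w| by []; lra.
have := near0 _ dw_ball dw_ge0; rewrite fme0 /= sub0r normrN => lt_eps.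
exact: le_trans (ler_norm _) (ltW lt_eps).
Qed.

Lemma protocell_moiety_drift_gt0 {R : realType} {N nR : nat} {S : 'M[R]_(N, nR)}
    {f : 'cV[R]_N -> 'cV[R]_nR} {Snu Sme : {set 'I_N}} {me : 'I_N}
    {fnu : 'cV[R]_N -> 'cV[R]_N} {fme : 'cV[R]_N -> R} {Cme : R}
    {b : 'rV[R]_N} {i0 : 'I_N} :
  membrane_flux Sme me fme -> nutrient_flux Snu fnu -> 0 < Cme ->
  b *m S = 0 -> (forall i, 0 <= b 0 i) -> (forall i, i \in Sme -> 0 < b 0 i) ->
  i0 \in Snu -> 0 < b 0 i0 ->
  exists d, 0 < d /\ forall x, nonneg_vec x -> bdot b x <= d ->
    0 < bdot b (protocell_rhs S f fnu fme me Cme x).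
Proof.
move=> hme hnu Cme_gt0 bS b_ge0 b_gt0 i0nu bi0_gt0.
have [P [Q [P_gt0 Q_ge0 nu_ge]]] :=
  nutrient_flux_affine_lower_bound hnu b_ge0 i0nu bi0_gt0.
have bme_gt0 : 0 < b 0 me by apply: b_gt0; case: hme => -[].
set B := b 0 me; set C := Cme^-1.
have C_gt0 : 0 < C by rewrite invr_gt0.
pose eps := P / (4 * (B + C)).
have eps_gt0 : 0 < eps by rewrite divr_gt0 ?mulr_gt0 ?addr_gt0.
have [d1 [d1_gt0 fme_le]] := membrane_flux_small hme b_ge0 b_gt0 _ eps_gt0.
exists (Num.min 1 (Num.min d1 (P / (4 * (Q + 1))))).
rewrite !lt_min ltr01 d1_gt0 divr_gt0 ?mulr_gt0 ?ltr_wpDl //; split=> // x x_ge0.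
rewrite !le_min => /and3P[Y_le1 /(fme_le _ x_ge0) F_le YQ_le].
rewrite bdot_protocell_rhs //; have := nu_ge x x_ge0; have := bdot_ge0 b_ge0 x_ge0.
set Y := bdot b x; set F := fme x => Y_ge0 nu_ge_x.
have F_ge0 : 0 <= F.
  have [[_ _ _ fme_mono <-] _] := hme.
  by apply: fme_mono => // i; rewrite mxE ?x_ge0.
have me_loss : F * B + F / Cme * Y <= P / 4.
  have -> : F * B + F / Cme * Y = F * (B + Y * C) by rewrite /C; ring.
  have <- : eps * (B + C) = P / 4.
    by rewrite /eps; field; rewrite gt_eqF ?addr_gt0.
  apply: ler_pM => //; first by rewrite addr_ge0 ?mulr_ge0 ?(ltW bme_gt0) ?(ltW C_gt0).
  by rewrite lerD2l ler_piMl // ltW.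
have nu_loss : Q * Y <= P / 4.
  apply: le_trans (_ : Q * (P / (4 * (Q + 1))) <= _); first exact: ler_wpM2l.
  rewrite mulrA ler_pdivrMr ?mulr_gt0 ?ltr_wpDl //.
  have -> : P / 4 * (4 * (Q + 1)) = Q * P + P by field.
  by rewrite lerDl ltW.
by rewrite -/B; lra.
Qed.

Theorem mainTheorem5 (R : realType) (N nR p : nat) (S : 'M[R]_(N, nR))
    (Mo : 'M[R]_(p, N))
    (f : 'cV[R]_N -> 'cV[R]_nR) (Snu Sme : {set 'I_N}) (me : 'I_N)
    (fnu : 'cV[R]_N -> 'cV[R]_N) (fme : 'cV[R]_N -> R) (Cme : R)
    (A : R -> 'cV[R]_N) (b : 'rV[R]_N) :
  conservative S ->
  moiety_set S Mo ->
  (forall x, nonneg_vec x -> forall j, 0 <= f x j 0) ->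
  membrane_flux Sme me fme ->
  nutrient_flux Snu fnu ->
  0 < Cme ->
  protocell_trajectory S f fnu fme me Cme A ->
  moiety_or_pos_comb Mo b ->
  Sme \subset supp b ->
  (exists i, (i \in Snu) && (i \in supp b)) ->
  (0 < bdot b (A 0) ->
     exists c : R, 0 < c /\ forall t, 0 <= t -> c <= bdot b (A t)) /\
  (bdot b (A 0) = 0 ->
     forall t1 : R, 0 < t1 ->
       exists c : R, 0 < c /\ forall t, t1 <= t -> c <= bdot b (A t)).
Proof.
move=> _ hMo _ hme hnu Cme_gt0 [A_cont A_ge0 A_derive] hb Sme_supp [i0 /andP[i0nu i0b]].
have b_ge0 := moiety_comb_ge0 hMo hb.
have b_gt0 i : i \in supp b -> 0 < b 0 i by rewrite inE lt_neqAle b_ge0 andbT eq_sym.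
have [d [d_gt0 drift_gt0]] := protocell_moiety_drift_gt0 (f := f) hme hnu Cme_gt0
  (moiety_comb_conserved hMo hb) b_ge0
  (fun i iS => b_gt0 i (fintype.subsetP Sme_supp i iS)) i0nu (b_gt0 i0 i0b).
apply: (@barrier_lower_bound R _
  (fun t => bdot b (protocell_rhs S f fnu fme me Cme (A t))) d _ _ _ d_gt0).
- by move=> u u_gt0; apply/is_derive_bdot/A_derive.
- by apply: within_continuous_comp _ A_cont => x _; apply: continuous_bdot.
- by move=> u u_ge0; apply/bdot_ge0/A_ge0.
- by move=> u u_gt0; apply/drift_gt0/A_ge0/ltW.
Qed.
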